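(* Let $\ell\ge2$ be an integer and $A,B\in\mathbb C$. Define $\tilde e_0,\dots,\tilde e_{\ell-1}$ by $\ell\tilde e_0=A$, $(\ell-1)\tilde e_1=-(A^2/\ell^2-B)$, and $$(\ell-(k+1))\tilde e_{k+1}=-\sum_{t=0}^k\tilde e_t\tilde e_{k-t},\qquad 1\le k\le\ell-2 .$$ Then $$q_\ell:=-\sum_{t=0}^{\ell-1}\tilde e_t\tilde e_{\ell-1-t}=\frac{(-1)^\ell}{(\ell!)^2}\prod_{j=0}^{\ell}\bigl(A-(\ell-2j)B^{1/2}\bigr),$$ where the right-hand side is independent of the choice of square root $B^{1/2}$ (it is a polynomial in $A,B$). *)

From HB Require Import structures.
From mathcomp Require Import all_boot all_order all_algebra.
From mathcomp Require Import complex.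
From mathcomp Require Import Rstruct.
Set Implicit Arguments. Unset Strict Implicit. Unset Printing Implicit Defensive.
Import Order.TTheory GRing.Theory Num.Theory.

Definition CC : numClosedFieldType := (Rdefinitions.R)[i].

From HB Require Import structures.
From mathcomp Require Import all_boot all_order all_algebra.
From mathcomp Require Import complex Rstruct.
From mathcomp Require Import ring zify.
Set Implicit Arguments.
Unset Strict Implicit.
Unset Printing Implicit Defensive.

Import Order.TTheory GRing.Theory Num.Theory.
Local Open Scope ring_scope.

(* Let E := \sum_(i < l) e_i X^i. The recursion says that E solves the Riccati
   equation X E' - l E - X E^2 + B X + A = 0 up to order X^l, and the coefficient
   of X^l of the left-hand side is q_l. Write B = lam^2. The substitution
   E + lam = - V' / V linearizes the Riccati equation into the confluent
   hypergeometric equation X V'' + (2 lam X - l) V' - (l lam + A) V = 0, which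
   is solved up to order X^l by the polynomial V of degree l with coefficients
     d_n = \prod_(j < n) (A + (l - 2j) lam) / \prod_(j < n) (j + 1)(j - l).
   Then G := V' + V (E + lam) satisfies
     (n - l) G_n + (terms in G_0, ..., G_(n-1)) = (confluent defect of V)_n
                                                 + (V * Riccati defect of E)_n,
   and both defects vanish below X^l, so G_n = 0 for n < l; at n = l the
   identity reads 0 = - (A - l lam) d_l + q_l. As the denominator of d_l is
   (-1)^l (l!)^2, this is the claimed product with s = -lam. *)

Section PolyCoef.
Variable R : nzRingType.
Implicit Types (p q : {poly R}) (l n : nat).

Lemma coefM_eq0_lt p q n :
  (forall j, (j < n)%N -> q`_j = 0) -> forall j, (j < n)%N -> (p * q)`_j = 0.
Proof.
move=> q_lt j lt_jn; rewrite coefM; apply: big1 => i _.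
by rewrite q_lt ?mulr0 // (leq_ltn_trans (leq_subr i j)).
Qed.

Lemma coefX_deriv p n : ('X * p^`())`_n = p`_n *+ n.
Proof. by rewrite coefXM; case: n => [|n] //=; rewrite coef_deriv. Qed.

Lemma coef_euler_shift l p q n : (forall j, (j < n)%N -> q`_j = 0) ->
  ('X * q^`() - l%:R * q + 'X * (p * q))`_n = (n%:R - l%:R) * q`_n.
Proof.
move=> q_lt; rewrite coefD coefB coefX_deriv mulr_natl coefMn coefXM.
case: n q_lt => [|n] q_lt /=; first by rewrite mulr0n addr0 !sub0r mulNr mulr_natl.
by rewrite (coefM_eq0_lt p q_lt (ltnSn n)) addr0 mulrBl !mulr_natl.
Qed.

End PolyCoef.

Section RiccatiOperators.
Variable R : comNzRingType.
Implicit Types (V E : {poly R}) (l n : nat) (A B lam : R).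

Definition riccati_op l A B E : {poly R} :=
  'X * E^`() - l%:R * E - 'X * (E * E) + B%:P * 'X + A%:P.

Definition confluent_op l A lam V : {poly R} :=
  'X * V^`()^`() + (2 * lam)%:P * ('X * V^`()) - l%:R * V^`()
  - (l%:R * lam + A)%:P * V.

Lemma coef_riccati_op l A B E n : (riccati_op l A B E)`_n =
  E`_n *+ n - E`_n *+ l - (if n == 0%N then 0 else (E * E)`_n.-1)
  + B * (n == 1)%:R + (if n == 0%N then A else 0).
Proof.
by rewrite !(coefB, coefD) coefX_deriv mulr_natl coefMn coefXM coefCM coefX coefC.
Qed.

Lemma coef_confluent_op l A lam V n : (confluent_op l A lam V)`_n =
  (n.+1%:R * (n%:R - l%:R)) * V`_n.+1 - (A + (l%:R - (2 * n)%:R) * lam) * V`_n.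
Proof.
rewrite /confluent_op -polyC_natr !(coefB, coefD, coefX_deriv, coefCM, coef_deriv).
by rewrite natrM; ring.
Qed.

Lemma riccati_linearization l A lam V E (F := E + lam%:P) (G := V^`() + V * F) :
  'X * G^`() - l%:R * G + 'X * (((2 * lam)%:P - F) * G)
  = confluent_op l A lam V + V * riccati_op l A (lam ^+ 2) E.
Proof.
rewrite /G /F /confluent_op /riccati_op derivD derivM derivD derivC addr0.
by rewrite !(polyCD, polyCM, polyC_natr, rmorphXn); ring.
Qed.

End RiccatiOperators.

Lemma prod_natS (R : pzSemiRingType) n : \prod_(j < n) (j.+1)%:R = n`!%:R :> R.
Proof. by rewrite fact_prod big_add1 big_mkord natr_prod. Qed.

Lemma natrB_neq0 (R : numDomainType) (a b : nat) : a <> b -> (a%:R - b%:R : R) != 0.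
Proof. by move=> neq_ab; rewrite subr_eq0 eqr_nat; apply/eqP. Qed.

Section RiccatiRecursion.
Variable F : numFieldType.
Variables (l : nat) (A B lam : F) (e : nat -> F).
Hypothesis l_ge2 : (2 <= l)%N.
Hypothesis lam2 : lam ^+ 2 = B.
Hypothesis he0 : l%:R * e 0%N = A.
Hypothesis he1 : (l - 1)%:R * e 1%N = - (A ^+ 2 / (l%:R) ^+ 2 - B).
Hypothesis herec : forall k : nat, (1 <= k)%N -> (k <= l - 2)%N ->
  (l - k.+1)%:R * e k.+1 = - \sum_(t < k.+1) e t * e (k - t)%N.

Definition riccati_poly : {poly F} := \poly_(i < l) e i.

Definition hyper_num n := \prod_(j < n) (A + (l%:R - (2 * j)%:R) * lam).
Definition hyper_den n := \prod_(j < n) ((j.+1)%:R * (j%:R - l%:R)) : F.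
Definition hyper_poly : {poly F} := \poly_(i < l.+1) (hyper_num i / hyper_den i).

Lemma coef_riccati_poly_sqr m : (m < l)%N ->
  (riccati_poly * riccati_poly)`_m = \sum_(t < m.+1) e t * e (m - t)%N.
Proof.
move=> lt_ml; rewrite coefM; apply: eq_bigr => [[j lt_jm]] _ /=.
by rewrite !coef_poly (leq_trans lt_jm lt_ml) (leq_ltn_trans (leq_subr _ _) lt_ml).
Qed.

Lemma riccati_defect_lt n : (n < l)%N -> (riccati_op l A B riccati_poly)`_n = 0.
Proof.
move=> lt_nl; rewrite coef_riccati_op coef_poly lt_nl.
case: n lt_nl => [|[|m]] lt_nl /=; first by rewrite -he0; ring.
- have e0_sqr : A ^+ 2 / l%:R ^+ 2 = e 0%N * e 0%N.
    by rewrite -he0; field; rewrite pnatr_eq0 -lt0n (leq_trans _ l_ge2).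
  move: he1; rewrite e0_sqr natrB; last by lia.
  rewrite coef_riccati_poly_sqr ?(ltnW lt_nl) // big_ord1 /= => he1'.
  transitivity (- ((l%:R - 1) * e 1%N + (e 0%N * e 0%N - B))); first by ring.
  by rewrite he1' addNr oppr0.
- have le_m_l2 : (m.+1 <= l - 2)%N by lia.
  have := herec (ltn0Sn m) le_m_l2; rewrite natrB; last by lia.
  rewrite coef_riccati_poly_sqr; last by lia.
  move=> herec'; set S := \sum_(_ < _) _.
  transitivity (- ((l%:R - m.+2%:R) * e m.+2 + S)); first by ring.
  by rewrite herec' addNr oppr0.
Qed.

Lemma riccati_defect_top :
  (riccati_op l A B riccati_poly)`_l = - \sum_(t < l) e t * e (l - 1 - t)%N.
Proof.
rewrite coef_riccati_op coef_poly ltnn /= mul0rn subrr sub0r.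
rewrite (gtn_eqF (ltnW l_ge2)) (gtn_eqF l_ge2) mulr0 !addr0.
rewrite coef_riccati_poly_sqr; last by lia.
by rewrite prednK ?subn1 //; lia.
Qed.

Lemma hyper_den_neq0 n : (n <= l)%N -> hyper_den n != 0.
Proof.
elim: n => [|n IHn lt_nl]; first by rewrite /hyper_den big_ord0 oner_neq0.
rewrite /hyper_den big_ord_recr /= mulf_neq0 ?IHn ?(ltnW lt_nl) //.
by rewrite mulf_neq0 ?pnatr_eq0 // natrB_neq0 // => eq_nl; rewrite eq_nl ltnn in lt_nl.
Qed.

Lemma hyper_coefS n : (n < l)%N ->
  (n.+1%:R * (n%:R - l%:R)) * (hyper_num n.+1 / hyper_den n.+1)
  = (A + (l%:R - (2 * n)%:R) * lam) * (hyper_num n / hyper_den n).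
Proof.
move=> lt_nl; have := hyper_den_neq0 (ltnW lt_nl).
rewrite /hyper_num /hyper_den !big_ord_recr /= => den_neq0.
have n1_neq0 : n.+1%:R != 0 :> F by rewrite pnatr_eq0.
have nl_neq0 : n%:R - l%:R != 0 :> F.
  by apply: natrB_neq0 => eq_nl; rewrite eq_nl ltnn in lt_nl.
by field; rewrite den_neq0 nl_neq0 addrC natr1 n1_neq0.
Qed.

Lemma confluent_defect_lt n : (n < l)%N -> (confluent_op l A lam hyper_poly)`_n = 0.
Proof.
move=> lt_nl; rewrite coef_confluent_op !coef_poly !ltnS lt_nl (ltnW lt_nl).
by rewrite hyper_coefS // subrr.
Qed.

Lemma confluent_defect_top :
  (confluent_op l A lam hyper_poly)`_l = - (hyper_num l.+1 / hyper_den l).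
Proof.
rewrite coef_confluent_op !coef_poly ltnn ltnSn mulr0 sub0r.
by rewrite /hyper_num big_ord_recr /=; ring.
Qed.

Definition linearized_poly : {poly F} :=
  hyper_poly^`() + hyper_poly * (riccati_poly + lam%:P).

Lemma coef_linearized n : (forall j, (j < n)%N -> linearized_poly`_j = 0) ->
  (n%:R - l%:R) * linearized_poly`_n
  = (confluent_op l A lam hyper_poly + hyper_poly * riccati_op l A B riccati_poly)`_n.
Proof. by move=> G_lt; rewrite -lam2 -riccati_linearization coef_euler_shift. Qed.

Lemma linearized_coef_lt n : (n < l)%N -> linearized_poly`_n = 0.
Proof.
elim/ltn_ind: n => n IHn lt_nl.
have := coef_linearized (fun j lt_jn => IHn j lt_jn (ltn_trans lt_jn lt_nl)).
rewrite coefD confluent_defect_lt // (coefM_eq0_lt _ riccati_defect_lt) // addr0.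
have nl_neq0 : n%:R - l%:R != 0 :> F.
  by apply: natrB_neq0 => eq_nl; rewrite eq_nl ltnn in lt_nl.
by move/eqP; rewrite mulf_eq0 (negbTE nl_neq0) => /eqP.
Qed.

Lemma riccati_top_hyper :
  - \sum_(t < l) e t * e (l - 1 - t)%N = hyper_num l.+1 / hyper_den l.
Proof.
have := coef_linearized linearized_coef_lt.
have top_prod : (hyper_poly * riccati_op l A B riccati_poly)`_l
                = - \sum_(t < l) e t * e (l - 1 - t)%N.
  rewrite coefM big_ord_recl big1 ?addr0 => [|i _].
    rewrite subn0 riccati_defect_top coef_poly /hyper_num /hyper_den.
    by rewrite !big_ord0 divr1 mul1r.
  by rewrite riccati_defect_lt ?mulr0 // lift0 /=; lia.
rewrite subrr mul0r coefD confluent_defect_top top_prod.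
by move/eqP; rewrite eq_sym addrC subr_eq0 => /eqP.
Qed.

Lemma hyper_den_top : hyper_den l = (-1) ^+ l * (l`!%:R) ^+ 2.
Proof.
rewrite /hyper_den big_split /= prod_natS (reindex_inj rev_ord_inj) /=.
rewrite (eq_bigr (fun j : 'I_l => - (j.+1)%:R)) => [|j _]; last first.
  by rewrite natrB ?ltn_ord //; ring.
by rewrite prodrN card_ord prod_natS; ring.
Qed.

End RiccatiRecursion.

Theorem lemma3p3 (l : nat) (hl : (2 <= l)%N) (A B : CC) (e : nat -> CC)
  (he0 : l%:R * e 0%N = A)
  (he1 : (l - 1)%:R * e 1%N = - (A ^+ 2 / (l%:R) ^+ 2 - B))
  (herec : forall k : nat, (1 <= k)%N -> (k <= l - 2)%N ->
     (l - k.+1)%:R * e k.+1 = - \sum_(t < k.+1) e t * e (k - t)%N) :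
  forall s : CC, s ^+ 2 = B ->
  - \sum_(t < l) e t * e (l - 1 - t)%N =
    (-1) ^+ l / (l`!%:R) ^+ 2 * \prod_(j < l.+1) (A - (l%:R - (2 * j)%:R) * s).
Proof.
move=> s s2; have lam2 : (- s) ^+ 2 = B by rewrite sqrrN s2.
rewrite (riccati_top_hyper hl lam2 he0 he1 herec) hyper_den_top /hyper_num.
under eq_bigr do rewrite mulrN.
by rewrite invfM invr_sign mulrC.
Qed.
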